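(* Let $\Phi=\forall u_1\ldots\forall u_n\exists e_1(D_1)\ldots\exists e_m(D_m).\varphi$ be a DQBF with prefix $\mathcal{Q}$, let $A$ be a set of arbiter variables, let $\psi$ be a CNF with $\mathit{var}(\psi)\subseteq U\cup E\cup A$, and let $C=\neg p\vee\ell$ be a forcing clause in $\psi$. Then $\mathcal{Q}\exists A(\emptyset).\psi\wedge C$ is true if and only if $\mathcal{Q}\exists A(\emptyset).\psi$ is true.
   Context: For a set $V$ of variables, $[V]$ is the set of assignments $V\to\{\textsc{true},\textsc{false}\}$; assignments are identified with terms of the literals they make true, $\neg\sigma$ is the clause of the negations of these literals, and $\sigma|_W$ denotes restriction to (the part of the domain lying in) $W$. A DQBF is $\forall u_1\ldots\forall u_n\exists e_1(D_1)\ldots\exists e_m(D_m).\varphi$ with pairwise distinct variables, $U=\{u_i\}$, $E=\{e_j\}$, dependency sets $D(e_j)=D_j\subseteq U$, and $\varphi$ a CNF over $U\cup E$; a model is a family $F=(F_e)_{e}$ with $F_e:[D(e)]\to\{\textsc{true},\textsc{false}\}$ such that for every $\sigma\in[U]$, $\sigma\cup F(\sigma)$ satisfies the matrix, where $F(\sigma)$ assigns each existential $e$ the value $F_e(\sigma|_{D(e)})$; the DQBF is true iff it has a model. Arbiter variables are fresh variables $e^\sigma$ for $e\in E$, $\sigma\in[D(e)]$. For a set $A$ of them and a CNF $\psi$, $\mathcal{Q}\exists A(\emptyset).\psi$ is the DQBF whose prefix is that of $\Phi$ extended by every variable of $A$ as an existential variable with empty dependency set, and whose matrix is $\psi$. Forcing: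 let $\ell$ be a literal on a variable in $E$, $\psi$ a formula with $\mathit{var}(\psi)\subseteq U\cup E\cup A$, and $\sigma$ a partial assignment to $U\cup A$; $\ell$ is forced by $\sigma$ in $\psi$ if $\psi\wedge\sigma\wedge\neg\ell$ is unsatisfiable, and in that case $\neg(\sigma|_{D(\mathit{var}(\ell))\cup A})\vee\ell$ is called a forcing clause in $\psi$. *)

From HB Require Import structures.
From mathcomp Require Import all_boot.

Set Implicit Arguments.
Unset Strict Implicit.
Unset Printing Implicit Defensive.

(* A literal is a variable together with its polarity: (x, true) is x,
   (x, false) is the negation of x. *)
Definition literal (W : Type) := (W * bool)%type.
Definition clause (W : Type) := seq (literal W).
Definition cnf (W : Type) := seq (clause W).

Definition lit_sat (W : Type) (a : W -> bool) (l : literal W) : bool :=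
  a l.1 == l.2.
Definition cnf_sat (W : Type) (a : W -> bool) (f : cnf W) : bool :=
  all (fun C => has (lit_sat a) C) f.

Definition vars_in (W : eqType) (f : cnf W) (S : pred W) : Prop :=
  forall C l, C \in f -> l \in C -> S l.1.

Definition restr (W : finType) (sigma : W -> bool) (S : {set W})
  : {ffun {x : W | x \in S} -> bool} := [ffun x => sigma (val x)].

Definition model_ext (W : finType) (E : {set W}) (D : W -> {set W})
  (F : forall e : W, {ffun {x : W | x \in D e} -> bool} -> bool)
  (sigma : W -> bool) : W -> bool :=
  fun x => if x \in E then F x (restr sigma (D x)) else sigma x.

(* F is a model of the DQBF with universals U, existentials E,
   dependency sets D and matrix f. An element of [U] is represented by a
   total assignment that is false outside U. *)
Definition is_model (W : finType) (U E : {set W}) (D : W -> {set W})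
  (f : cnf W) (F : forall e : W, {ffun {x : W | x \in D e} -> bool} -> bool)
  : Prop :=
  forall sigma : {ffun W -> bool},
    (forall x, x \notin U -> sigma x = false) ->
    cnf_sat (@model_ext W E D F sigma) f.

Definition dqbf_true (W : finType) (U E : {set W}) (D : W -> {set W})
  (f : cnf W) : Prop :=
  exists F, @is_model W U E D f F.

Definition wf_dqbf (W : finType) (U E : {set W}) (D : W -> {set W})
  (f : cnf W) : Prop :=
  [/\ [disjoint U & E], (forall e, e \in E -> D e \subset U)
    & vars_in f (fun x => (x \in U) || (x \in E))].

(* Variables of the extended formula: original variables [inl x], and
   arbiter variables [inr (e, s)] standing for e^sigma where sigma is the
   assignment to D(e) making exactly the variables of s true. *)
Notation avar X := (X + (X * {set X}))%type.

Definition is_arbiter_set (X : finType) (E : {set X}) (D : X -> {set X})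
  (A : {set X * {set X}}) : Prop :=
  forall a, a \in A -> a.1 \in E /\ a.2 \subset D a.1.

Definition extU (X : finType) (U : {set X}) : {set avar X} := inl @: U.
Definition extE (X : finType) (E : {set X}) (A : {set X * {set X}})
  : {set avar X} := (inl @: E) :|: (inr @: A).
Definition extD (X : finType) (D : X -> {set X}) (w : avar X) : {set avar X} :=
  match w with inl x => inl @: D x | inr _ => set0 end.

Definition forced (X : finType) (psi : cnf (avar X))
  (sigma : {ffun avar X -> option bool}) (l : literal (avar X)) : Prop :=
  ~ exists a : avar X -> bool,
      [/\ cnf_sat a psi, (forall w b, sigma w = Some b -> a w = b)
        & ~~ lit_sat a l].

(* ¬(σ|_{D(var ℓ) ∪ A}) ∨ ℓ *)
Definition forcing_clause (X : finType) (D : X -> {set X})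
  (A : {set X * {set X}}) (sigma : {ffun avar X -> option bool})
  (l : literal (avar X)) : clause (avar X) :=
  pmap (fun w => if w \in extD D l.1 :|: inr @: A
                 then omap (fun b => (w, ~~ b)) (sigma w) else None)
       (enum {: avar X}) ++ [:: l].

From HB Require Import structures.
From mathcomp Require Import all_boot.

Set Implicit Arguments.
Unset Strict Implicit.
Unset Printing Implicit Defensive.

(* Any model F of psi is already a model of the forcing clause C = ~p \/ l.
   If sigma0 ∪ F(sigma0) falsified C, it would agree with p on D(var l) and
   on the arbiters, and falsify l. Overwriting the universals of sigma0 by p
   gives sigma1 with sigma1 ∪ F(sigma1) extending p: arbiters depend on no
   universal, and var l only reads D(var l), where sigma0 already agrees
   with p, so l is still falsified. As sigma1 ∪ F(sigma1) satisfies psi,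
   this contradicts that l is forced by p. *)

Lemma cnf_sat_cat (W : Type) (a : W -> bool) (f g : cnf W) :
  cnf_sat a (f ++ g) = cnf_sat a f && cnf_sat a g.
Proof. exact: all_cat. Qed.

Lemma is_model_cat (W : finType) (U E : {set W}) (D : W -> {set W})
    (f g : cnf W) F :
  @is_model W U E D (f ++ g) F <-> is_model U E f F /\ is_model U E g F.
Proof.
split=> [HF | [Hf Hg] s sU]; last by rewrite cnf_sat_cat Hf ?Hg.
by split=> s sU; have := HF s sU; rewrite cnf_sat_cat => /andP[].
Qed.

Lemma model_ext_out (W : finType) (E : {set W}) (D : W -> {set W}) F s x :
  x \notin E -> @model_ext W E D F s x = s x.
Proof. by rewrite /model_ext => /negbTE->. Qed.

Lemma model_ext_local (W : finType) (E : {set W}) (D : W -> {set W}) F s s' x :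
  x \in E -> {in D x, s =1 s'} -> @model_ext W E D F s x = model_ext E F s' x.
Proof.
move=> xE ss'; rewrite /model_ext xE; congr (F x _).
by apply/ffunP=> y; rewrite !ffunE; apply: ss' (valP y).
Qed.

Definition overwrite (W : finType) (V : {set W}) (s : {ffun W -> bool})
    (p : {ffun W -> option bool}) : {ffun W -> bool} :=
  [ffun w => if w \in V then odflt (s w) (p w) else s w].

Lemma overwrite_out (W : finType) (V : {set W}) s
    (p : {ffun W -> option bool}) w :
  w \notin V -> overwrite V s p w = s w.
Proof. by rewrite ffunE => /negbTE->. Qed.

Lemma overwrite_in (W : finType) (V : {set W}) s
    (p : {ffun W -> option bool}) w b :
  w \in V -> p w = Some b -> overwrite V s p w = b.
Proof. by rewrite ffunE => -> ->. Qed.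

Section Forcing.

Variables (X : finType) (U E : {set X}) (D : X -> {set X}).
Variable A : {set X * {set X}}.

Lemma mem_inl_extU u : (@inl X (X * {set X}) u \in extU U) = (u \in U).
Proof. by rewrite mem_imset // => ? ? []. Qed.

Lemma mem_inl_extE u : (@inl X (X * {set X}) u \in extE E A) = (u \in E).
Proof.
rewrite in_setU mem_imset; last by move=> ? ? [].
by case: (u \in E) => //=; apply/negbTE/imsetP=> -[].
Qed.

Lemma mem_inr_extE x : (@inr X (X * {set X}) x \in extE E A) = (x \in A).
Proof.
rewrite in_setU mem_imset; last by move=> ? ? [].
by case: (x \in A); rewrite ?orbT //= orbF; apply/negbTE/imsetP=> -[].
Qed.

Lemma falsify_forcing_clause (a : avar X -> bool) sigma l :
  ~~ has (lit_sat a) (forcing_clause D A sigma l) ->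
  (forall w b, w \in extD D l.1 :|: inr @: A -> sigma w = Some b -> a w = b)
  /\ ~~ lit_sat a l.
Proof.
rewrite has_cat negb_or /= orbF => /andP[/hasPn Nsig Nl]; split=> // w b Sw sw.
have /Nsig : (w, ~~ b) \in pmap (fun w => if w \in extD D l.1 :|: inr @: A
                 then omap (fun b => (w, ~~ b)) (sigma w) else None)
       (enum {: avar X}).
  by rewrite mem_pmap; apply/mapP; exists w; rewrite ?mem_enum ?Sw ?sw.
by rewrite /lit_sat /=; case: (a w); case: b {sw}.
Qed.

Hypothesis disjUE : [disjoint U & E].
Hypothesis DsubU : forall e, e \in E -> D e \subset U.

Lemma extU_notin_extE w : w \in extU U -> w \notin extE E A.
Proof.
by case/imsetP=> u uU ->; rewrite mem_inl_extE (disjointFr disjUE uU).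
Qed.

Lemma is_model_forcing_clause
    (F : forall w : avar X, {ffun {v | v \in extD D w} -> bool} -> bool)
    (psi : cnf (avar X)) (sigma : {ffun avar X -> option bool})
    (l : literal (avar X)) :
  (forall w, sigma w != None -> w \in extU U :|: inr @: A) ->
  l.1 \in inl @: E ->
  forced psi sigma l ->
  is_model (extU U) (extE E A) psi F ->
  is_model (extU U) (extE E A) [:: forcing_clause D A sigma l] F.
Proof.
move=> supp_sigma /imsetP[e eE le] Hforced HF s0 s0U.
rewrite /cnf_sat /= andbT; apply/negPn/negP=> /falsify_forcing_clause[agree Nl].
pose s1 := overwrite (extU U) s0 sigma.
have s1U w : w \notin extU U -> s1 w = false.
  by move=> wU; rewrite overwrite_out ?s0U.
have s1_sigma w b : sigma w = Some b -> model_ext (extE E A) F s1 w = b.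
  move=> sw; have : w \in extU U :|: inr @: A by apply: supp_sigma; rewrite sw.
  case/setUP=> [wU | /imsetP[x xA wx]]; last subst w.
    by rewrite model_ext_out ?extU_notin_extE // (overwrite_in _ wU sw).
  rewrite (@model_ext_local _ _ _ _ _ s0) ?mem_inr_extE //; last first.
    by move=> ?; rewrite in_set0.
  by apply: agree sw; rewrite in_setU imset_f ?orbT.
have s1_l : model_ext (extE E A) F s1 l.1 = model_ext (extE E A) F s0 l.1.
  rewrite le; apply: model_ext_local; first by rewrite mem_inl_extE.
  move=> _ /imsetP[u uDe ->]; have uU := subsetP (DsubU eE) u uDe.
  rewrite ffunE mem_inl_extU uU; case sw: (sigma (inl u)) => [b|] //=.
  rewrite -(agree _ _ _ sw); last by rewrite in_setU le imset_f.
  by rewrite model_ext_out ?extU_notin_extE ?mem_inl_extU.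
apply: Hforced; exists (model_ext (extE E A) F s1).
by split=> //; [exact: HF s1 s1U | rewrite /lit_sat s1_l].
Qed.

End Forcing.

Theorem corollary2 (X : finType) (U E : {set X}) (D : X -> {set X})
  (phi : cnf X) (A : {set X * {set X}}) (psi : cnf (avar X))
  (sigma : {ffun avar X -> option bool}) (l : literal (avar X)) :
  wf_dqbf U E D phi ->
  is_arbiter_set E D A ->
  vars_in psi (fun w => (w \in extU U) || (w \in extE E A)) ->
  (forall w, sigma w != None -> w \in extU U :|: inr @: A) ->
  l.1 \in inl @: E ->
  forced psi sigma l ->
  dqbf_true (extU U) (extE E A) (extD D) (psi ++ [:: forcing_clause D A sigma l])
  <-> dqbf_true (extU U) (extE E A) (extD D) psi.
Proof.
move=> [disjUE DsubU _] _ _ supp_sigma le Hforced.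
split=> -[F HF]; exists F.
  by case/is_model_cat: HF => ? _.
apply/is_model_cat; split=> //.
exact: (is_model_forcing_clause disjUE DsubU supp_sigma le Hforced HF).
Qed.
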